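(* Let $\theta:R\to S$ be a ring homomorphism, and let $\mathfrak p\subset R$, $\mathfrak q\subset S$ be prime ideals with $\mathfrak p\subseteq\theta^{-1}(\mathfrak q)$. Suppose there exists an $R$-linear map $T:S\to R$ with $T(1)=1$ and $T(\mathfrak q)\subseteq\mathfrak p$. If $S$ is purely $F$-regular along $\mathfrak q$, then $R$ is purely $F$-regular along $\mathfrak p$.
   Context: All rings are noetherian $F$-finite commutative $\mathbb F_p$-algebras. $F^e_*R$ is $R$ viewed as an $R$-module via $r\mapsto r^{p^e}$; $\mathcal C_{e,R}=\operatorname{Hom}_R(F^e_*R,R)$. For an ideal $\mathfrak a$, $\phi\in\mathcal C_{e,R}$ is $\mathfrak a$-compatible if $\phi(F^e_*\mathfrak a)\subseteq\mathfrak a$. For a prime $\mathfrak p\subset R$, $R$ is purely $F$-regular along $\mathfrak p$ if (i) there exist $e>0$ and a $\mathfrak p$-compatible $\phi\in\mathcal C_{e,R}$ with $\phi(F^e_*R)\not\subseteq\mathfrak p$, and (ii) every proper ideal $\mathfrak b\subsetneq R$ that is $\phi$-compatible for every $e>0$ and every $\mathfrak p$-compatible $\phi\in\mathcal C_{e,R}$ satisfies $\mathfrak b\subseteq\mathfrak p$. (Equivalently: for every $r\notin\mathfrak p$ there are $e>0$ and a $\mathfrak p$-compatible $\phi\in\mathcal C_{e,R}$ with $\phi(F^e_*r)=1$.) *)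

From HB Require Import structures.
From mathcomp Require Import all_boot all_order all_algebra.
Set Implicit Arguments. Unset Strict Implicit. Unset Printing Implicit Defensive.
Import GRing.Theory.
Local Open Scope ring_scope.

Definition is_ideal (R : comNzRingType) (I : R -> Prop) : Prop :=
  [/\ I 0, (forall x y, I x -> I y -> I (x + y)) & (forall a x, I x -> I (a * x))].

Definition is_proper_ideal (R : comNzRingType) (I : R -> Prop) : Prop :=
  is_ideal I /\ ~ I 1.

Definition is_prime_ideal (R : comNzRingType) (I : R -> Prop) : Prop :=
  is_proper_ideal I /\ (forall x y, I (x * y) -> I x \/ I y).

Definition noetherian (R : comNzRingType) : Prop :=
  forall I : nat -> R -> Prop,
    (forall n, is_ideal (I n)) ->
    (forall n x, I n x -> I n.+1 x) ->
    exists N, forall n x, (N <= n)%N -> I n x -> I N x.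

(* F-finite (R of characteristic p): F_*R is a finitely generated R-module,
   i.e. there are s_1..s_k with every x = sum_i c_i^p * s_i. *)
Definition F_finite (p : nat) (R : comNzRingType) : Prop :=
  exists s : seq R, forall x : R, exists c : seq R,
    size c = size s /\ x = \sum_(i < size s) (c`_i) ^+ p * s`_i.

(* phi is an element of C_{e,R} = Hom_R(F^e_* R, R): additive, and
   phi (F^e_* (a^{p^e} x)) = a * phi (F^e_* x). *)
Definition in_Cartier (p : nat) (R : comNzRingType) (e : nat) (phi : R -> R) : Prop :=
  (forall x y, phi (x + y) = phi x + phi y) /\
  (forall a x, phi (a ^+ (p ^ e) * x) = a * phi x).

Definition compatible (R : comNzRingType) (I : R -> Prop) (phi : R -> R) : Prop :=
  forall x, I x -> I (phi x).

Definition purely_F_regular_along (p : nat) (R : comNzRingType) (P : R -> Prop) : Prop :=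
  (exists e : nat, exists phi : R -> R,
      (0 < e)%N /\ in_Cartier p e phi /\ compatible P phi /\
      exists x, ~ P (phi x)) /\
  (forall B : R -> Prop, is_proper_ideal B ->
     (forall (e : nat) (phi : R -> R), (0 < e)%N -> in_Cartier p e phi ->
         compatible P phi -> compatible B phi) ->
     forall x, B x -> P x).

From HB Require Import structures.
From mathcomp Require Import all_boot all_order all_algebra.
Import GRing.Theory.
From Stdlib Require Import Classical.
Set Implicit Arguments. Unset Strict Implicit.
Local Open Scope ring_scope.

(* Write "Q-map of degree n" for a p^{-n}-linear map g : S -> S compatible
   with Q (degree 0 allowed); Q-maps are closed under composition and under
   premultiplication by elements of S, and a degree-0 map is multiplication
   by g 1.  Every Q-map g yields the P-map r |-> T (g (theta r)) on R.
   For an ideal B of R, the key construction is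
        B^S = { s in S | T (g s) in B for every Q-map g },
   an ideal of S which is proper when B is, and compatible with all Q-maps.
   Hence, when S is purely F-regular along Q, B^S lies in Q.  Taking B = P
   and s = phi x with phi x not in Q gives a Q-map g with T (g (phi x)) not
   in P, whence condition (i) for R; taking B compatible with all P-maps,
   theta B lies in B^S, hence in Q, and applying T gives B in P: (ii). *)

Section CartierMaps.
Variables (p : nat) (S : comNzRingType).

Definition compatible_map (Q : S -> Prop) (n : nat) (g : S -> S) : Prop :=
  in_Cartier p n g /\ compatible Q g.

Lemma in_Cartier_comp n e (g f : S -> S) :
  in_Cartier p n g -> in_Cartier p e f -> in_Cartier p (n + e) (g \o f).
Proof.
move=> [gD gM] [fD fM]; split=> [x y|a x] /=; first by rewrite fD gD.
by rewrite expnD exprM fM gM.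
Qed.

Lemma in_Cartier_premul n (g : S -> S) (c : S) :
  in_Cartier p n g -> in_Cartier p n (fun s => g (c * s)).
Proof.
move=> [gD gM]; split=> [x y|a x]; first by rewrite mulrDr gD.
by rewrite mulrCA gM.
Qed.

Lemma in_Cartier0_mul (g : S -> S) (x : S) : in_Cartier p 0 g -> g x = x * g 1.
Proof. by move=> [_ gM]; rewrite -gM expn0 expr1 mulr1. Qed.

Lemma in_Cartier_id : in_Cartier p 0 (@id S).
Proof. by split=> // a x; rewrite expn0 expr1. Qed.

Variable Q : S -> Prop.

Lemma compatible_map_comp n e (g f : S -> S) :
  compatible_map Q n g -> compatible_map Q e f -> compatible_map Q (n + e) (g \o f).
Proof.
by move=> [gC gQ] [fC fQ]; split; [exact: in_Cartier_comp | move=> x /fQ /gQ].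
Qed.

Hypothesis idealQ : is_ideal Q.

Lemma compatible_map_premul n (g : S -> S) (c : S) :
  compatible_map Q n g -> compatible_map Q n (fun s => g (c * s)).
Proof.
case: idealQ => _ _ QM [gC gQ]; split; first exact: in_Cartier_premul.
by move=> x /(QM c) /gQ.
Qed.

End CartierMaps.

Lemma additive_map0 (S R : comNzRingType) (f : S -> R) :
  (forall x y, f (x + y) = f x + f y) -> f 0 = 0.
Proof. by move=> fD; apply: (@addrI _ (f 0)); rewrite -fD !addr0. Qed.

Section Transfer.
Variables (p : nat) (R S : comNzRingType) (theta : {rmorphism R -> S}).
Variables (P : R -> Prop) (Q : S -> Prop) (T : S -> R).
Hypothesis idealQ : is_ideal Q.
Hypothesis PsubQ : forall r, P r -> Q (theta r).
Hypothesis TQ : forall x, Q x -> P (T x).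
Hypothesis T_add : forall x y, T (x + y) = T x + T y.
Hypothesis T_lin : forall (a : R) (x : S), T (theta a * x) = a * T x.
Hypothesis T1 : T 1 = 1.

Lemma T_theta r : T (theta r) = r.
Proof. by rewrite -[theta r]mulr1 T_lin T1 mulr1. Qed.

Lemma pullback_compatible_map n (g : S -> S) :
  compatible_map p Q n g -> compatible_map p P n (fun r => T (g (theta r))).
Proof.
move=> [[gD gM] gQ]; split; last by move=> x /PsubQ /gQ /TQ.
split=> [x y|a x]; first by rewrite rmorphD gD T_add.
by rewrite rmorphM rmorphXn gM T_lin.
Qed.

Definition lifted_ideal (B : R -> Prop) (s : S) : Prop :=
  forall n g, compatible_map p Q n g -> B (T (g s)).

(* B^S is an ideal (via premultiplication), proper since T 1 = 1 is not in B. *)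
Lemma lifted_ideal_proper B : is_proper_ideal B -> is_proper_ideal (lifted_ideal B).
Proof.
move=> [[B0 BD BM] B1]; split; first split.
- by move=> n g [[gD _] _]; rewrite (additive_map0 gD) (additive_map0 T_add).
- move=> x y Bx By n g gQ; rewrite (proj1 (proj1 gQ)) T_add.
  by apply: BD; [exact: Bx gQ | exact: By gQ].
- by move=> a x Bx n g gQ; apply: (Bx n (fun s => g (a * s))); exact: compatible_map_premul.
- move=> B1S; apply: B1; rewrite -T1; apply: (B1S 0%N id).
  by split; [exact: in_Cartier_id | move=> x].
Qed.

Lemma lifted_ideal_compatible B e phi :
  compatible_map p Q e phi -> compatible (lifted_ideal B) phi.
Proof.
move=> phiQ x Bx n g gQ.
by apply: (Bx (n + e)%N (g \o phi)); exact: compatible_map_comp.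
Qed.

Lemma lifted_ideal_sub B : purely_F_regular_along p Q -> is_proper_ideal B ->
  forall s, lifted_ideal B s -> Q s.
Proof.
move=> [_ regQ] Bproper; apply: regQ; first exact: lifted_ideal_proper.
by move=> e phi _ phiC phiQ; apply: (@lifted_ideal_compatible B e); split.
Qed.

Lemma not_lifted_ideal B s : ~ lifted_ideal B s ->
  exists n g, compatible_map p Q n g /\ ~ B (T (g s)).
Proof.
move=> nBs; apply: NNPP => nex; apply: nBs => n g gQ.
by apply: NNPP => nB; apply: nex; exists n, g.
Qed.

Lemma theta_lifted_ideal B : is_ideal B ->
  (forall e phi, (0 < e)%N -> in_Cartier p e phi -> compatible P phi -> compatible B phi) ->
  forall b, B b -> lifted_ideal B (theta b).
Proof.
move=> [_ _ BM] BC b Bb [|n] g gQ.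
  by rewrite (in_Cartier0_mul _ (proj1 gQ)) T_lin mulrC; exact: BM.
by case: (pullback_compatible_map gQ) => gC gP; exact: BC gC gP b Bb.
Qed.

End Transfer.

Theorem proposition2p14 (p : nat) (R S : comNzRingType)
  (pR : p \in [pchar R]) (pS : p \in [pchar S])
  (noethR : noetherian R) (noethS : noetherian S)
  (ffR : F_finite p R) (ffS : F_finite p S)
  (theta : {rmorphism R -> S})
  (P : R -> Prop) (Q : S -> Prop)
  (primeP : is_prime_ideal P) (primeQ : is_prime_ideal Q)
  (PsubQ : forall r, P r -> Q (theta r))
  (T : S -> R)
  (T_add : forall x y, T (x + y) = T x + T y)
  (T_lin : forall (a : R) (x : S), T (theta a * x) = a * T x)
  (T1 : T 1 = 1)
  (TQ : forall x, Q x -> P (T x)) :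
  purely_F_regular_along p Q -> purely_F_regular_along p P.
Proof.
case: primeP primeQ => [properP _] [[idealQ _] _] regQ.
have liftedQ B := lifted_ideal_sub idealQ T_add T1 (B := B) regQ.
split.
- (* condition (i): pull back s |-> g (phi (x * s)), g a witnessing Q-map *)
  case: (regQ) => [[e [phi [e_gt0 [phiC [phiQ [x nQ]]]]]] _].
  have /not_lifted_ideal [n [g [gQ nP]]] : ~ lifted_ideal p Q T P (phi x).
    by move=> /(liftedQ P properP).
  have hQ : compatible_map p Q (n + e) (fun s => g (phi (x * s))).
    exact: (compatible_map_comp gQ (compatible_map_premul idealQ x (conj phiC phiQ))).
  case: (pullback_compatible_map PsubQ TQ T_add T_lin hQ) => hC hP.
  exists (n + e)%N, (fun r => T (g (phi (x * theta r)))).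
  split; first by rewrite addn_gt0 e_gt0 orbT.
  by do 2!split=> //; exists 1; rewrite rmorph1 mulr1.
- (* condition (ii): theta B lies in B^S, hence in Q; apply T *)
  move=> B properB BC b Bb; rewrite -(T_theta T_lin T1 b); apply: (TQ).
  apply: (liftedQ B properB).
  exact: (theta_lifted_ideal PsubQ TQ T_add T_lin (proj1 properB) BC Bb).
Qed.
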